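(* In the curved-exam game described in the context, let $BR_i(x_{-i}):=\arg\max_{x_i\in[0,1]}U_i(x_i,x_{-i})$ and $$C(x_{-i}):=\Big\{0,\ \alpha_i-(1-\alpha_i)\Big(\tfrac{nm}{n-1}-\bar x_{-i}\Big),\ \alpha_i\Big\}\cap[0,1].$$ Then $$BR_i(x_{-i})=\begin{cases}\{\alpha_i\} & \text{if } \frac{nm}{n-1}<\bar x_{-i}\le 1,\\[2pt] \arg\max_{x_i\in C(x_{-i})}U_i(x_i,x_{-i}) & \text{if } \frac{nm-1}{n-1}\le \bar x_{-i}\le\frac{nm}{n-1},\\[2pt] \{\alpha_i-(1-\alpha_i)(\frac{nm}{n-1}-\bar x_{-i})\} & \text{if } \frac{nm}{n-1}-\frac{\alpha_i}{1-\alpha_i}\le\bar x_{-i}<\frac{nm-1}{n-1},\\[2pt] \{0\} & \text{if } 0\le \bar x_{-i}\le \frac{nm}{n-1}-\frac{\alpha_i}{1-\alpha_i}.\end{cases}$$ (Whenever $\bar x_{-i}$ lies in one of the stated sets, $BR_i(x_{-i})$ is as given; some of these sets may be empty.)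
   Context: The curved-exam game: fix $n\ge2$, abilities $\alpha_1,\dots,\alpha_n\in(0,1)$, target mean $m\in(0,1)$. Student $i$ chooses $x_i\in[0,1]$; $x_{-i}=(x_j)_{j\ne i}$; $\bar x=\frac1n\sum_j x_j$, $\bar x_{-i}=\frac1{n-1}\sum_{j\ne i}x_j$. Grade $G_i(x)=x_i+\max(m-\bar x,0)=\max\big(m+\frac{n-1}{n}(x_i-\bar x_{-i}),x_i\big)$ (not truncated at 1); payoff $U_i(x)=G_i(x)^{\alpha_i}(1-x_i)^{1-\alpha_i}$. *)

(* R : realType, real powers via powR (a `^ x),
   which satisfies 0 `^ x = 0 for x <> 0, as needed for G^alpha at G = 0. *)
From HB Require Import structures.
From mathcomp Require Import all_boot all_order all_algebra.
From mathcomp Require Import all_classical all_reals all_analysis.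
Set Implicit Arguments. Unset Strict Implicit. Unset Printing Implicit Defensive.
Import Order.TTheory GRing.Theory Num.Theory.
Local Open Scope classical_set_scope.
Local Open Scope ring_scope.

Section Game.
Variables (R : realType) (n : nat).

Definition avg (x : 'I_n -> R) : R := (\sum_(j < n) x j) / n%:R.

Definition avg_others (x : 'I_n -> R) (i : 'I_n) : R :=
  (\sum_(j < n | j != i) x j) / (n.-1)%:R.

Definition grade (m : R) (x : 'I_n -> R) (i : 'I_n) : R :=
  x i + Num.max (m - avg x) 0.

Definition payoff (alpha : 'I_n -> R) (m : R) (x : 'I_n -> R) (i : 'I_n) : R :=
  powR (grade m x i) (alpha i) * powR (1 - x i) (1 - alpha i).

Definition upd (x : 'I_n -> R) (i : 'I_n) (y : R) : 'I_n -> R :=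
  fun j => if j == i then y else x j.

Definition argmax (S : set R) (f : R -> R) : set R :=
  [set y | S y /\ forall z, S z -> f z <= f y].

Definition best_response (alpha : 'I_n -> R) (m : R) (x : 'I_n -> R) (i : 'I_n)
  : set R :=
  argmax [set y | 0 <= y <= 1] (fun y => payoff alpha m (upd x i y) i).

Definition candidates (alpha : 'I_n -> R) (m : R) (x : 'I_n -> R) (i : 'I_n)
  : set R :=
  [set y | (y = 0 \/
            y = alpha i - (1 - alpha i) * (n%:R * m / (n.-1)%:R - avg_others x i) \/
            y = alpha i) /\ 0 <= y <= 1].

End Game.

From HB Require Import structures.
From mathcomp Require Import all_boot all_order all_algebra.
From mathcomp Require Import all_classical all_reals all_analysis.
From mathcomp Require Import ring lra.
Set Implicit Arguments. Unset Strict Implicit. Unset Printing Implicit Defensive.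
Import Order.TTheory GRing.Theory Num.Theory.
Local Open Scope classical_set_scope.
Local Open Scope ring_scope.

(* With b = (n-1)/n and c = nm/(n-1) - xbar_{-i}, student i's grade at effort y
   is max(y, b(c+y)), so the payoff is the upper envelope of the two Cobb-Douglas
   curves y^a (1-y)^(1-a) and (b(c+y))^a (1-y)^(1-a), which by strict weighted
   AM-GM are strictly unimodal with peaks a and a - (1-a)c.  If c < 0 the curve
   never binds and a wins; if c > (1-b)/b it binds on all of [0,1] and the
   second peak wins; if that peak is <= 0 and b >= 1/2, effort 0 beats both
   branches; otherwise every effort is beaten by one of 0, a - (1-a)c, a. *)

Section CobbDouglas.
Variable R : realType.
Implicit Types a p q u v w : R.

Lemma ln_lt_subr1 w : 0 < w -> w != 1 -> ln w < w - 1.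
Proof.
move=> w0 w1; have lnw0 : ln w != 0 by rewrite ln_eq0.
by have := expR_gt1Dx lnw0; rewrite lnK ?posrE //; lra.
Qed.

Lemma powR_amgm_lt a u v : 0 < a < 1 -> 0 <= u -> 0 <= v -> u != v ->
  powR u a * powR v (1 - a) < a * u + (1 - a) * v.
Proof.
move=> /andP[a0 a1] u0 v0 uv.
have [u_eq0|u_neq0] := eqVneq u 0.
  have v_gt0 : 0 < v by rewrite lt_def v0 andbT eq_sym -u_eq0.
  by rewrite u_eq0 powR0 ?gt_eqF // mul0r mulr0 add0r mulr_gt0 ?subr_gt0.
have [v_eq0|v_neq0] := eqVneq v 0.
  have u_gt0 : 0 < u by rewrite lt_def u0 u_neq0.
  by rewrite v_eq0 powR0 ?gt_eqF ?subr_gt0 // !mulr0 addr0 mulr_gt0.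
have {}u0 : 0 < u by rewrite lt_def u0 u_neq0.
have {}v0 : 0 < v by rewrite lt_def v0 v_neq0.
set M := a * u + (1 - a) * v.
have M0 : 0 < M by rewrite addr_gt0 ?mulr_gt0 ?subr_gt0.
have uM : u / M != 1.
  by apply: contra uv => /eqP/divr1_eq; rewrite /M => uM; apply/eqP; nra.
have vM : v / M != 1.
  by apply: contra uv => /eqP/divr1_eq; rewrite /M => vM; apply/eqP; nra.
have := ln_lt_subr1 (divr_gt0 u0 M0) uM.
have := ln_lt_subr1 (divr_gt0 v0 M0) vM.
rewrite !ln_div ?posrE // => lnv lnu.
have avg1 : a * (u / M) + (1 - a) * (v / M) = 1 by rewrite !mulrA -mulrDl divff ?gt_eqF.
rewrite /powR !gt_eqF // -expRD -[M in _ < M]lnK ?posrE // ltr_expR.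
nra.
Qed.

Definition cobb_douglas a p q := powR p a * powR q (1 - a).

Lemma cobb_douglas_le a p p' q : 0 < a -> 0 <= p <= p' ->
  cobb_douglas a p q <= cobb_douglas a p' q.
Proof.
move=> a0 /andP[p0 pp']; rewrite ler_wpM2r ?powR_ge0 //.
by rewrite ge0_ler_powR ?nnegrE ?(ltW a0) ?(le_trans p0).
Qed.

(* cobb_douglas a is concave and 1-homogeneous: the last hypothesis puts
   (p', q') under its tangent plane at (p, q), and off the ray through (p, q)
   the function lies strictly below that plane. *)
Lemma cobb_douglas_lt a p q p' q' : 0 < a < 1 ->
  0 < p -> 0 < q -> 0 <= p' -> 0 <= q' -> p' * q != q' * p ->
  a * p' * q + (1 - a) * q' * p <= p * q ->
  cobb_douglas a p' q' < cobb_douglas a p q.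
Proof.
move=> a01 p0 q0 p'0 q'0 nprop tangent.
have rp0 : 0 <= p' / p by rewrite divr_ge0 // ltW.
have rq0 : 0 <= q' / q by rewrite divr_ge0 // ltW.
have -> : cobb_douglas a p' q' =
    cobb_douglas a p q * (powR (p' / p) a * powR (q' / q) (1 - a)).
  rewrite /cobb_douglas mulrACA -!powRM ?(ltW p0) ?(ltW q0) //.
  by rewrite [p * _]mulrC [q * _]mulrC !divfK ?lt0r_neq0.
rewrite -[ltRHS]mulr1 ltr_pM2l ?mulr_gt0 ?powR_gt0 //.
have ratio_neq : p' / p != q' / q by rewrite eqr_div ?lt0r_neq0.
apply: lt_le_trans (powR_amgm_lt a01 rp0 rq0 ratio_neq) _.
have -> : a * (p' / p) + (1 - a) * (q' / q) = (a * p' * q + (1 - a) * q' * p) / (p * q).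
  by field; rewrite !lt0r_neq0.
by rewrite ler_pdivrMr ?mulr_gt0 // mul1r.
Qed.
End CobbDouglas.

Lemma argmax_set1 (R : realType) (S : set R) (f : R -> R) y :
  S y -> (forall z, S z -> z != y -> f z < f y) -> argmax S f = [set y].
Proof.
move=> Sy y_max; apply/seteqP; split=> [z [Sz z_max]|_ ->] /=; last first.
  split=> // z Sz; have [->|zy] := eqVneq z y; first exact: lexx.
  exact/ltW/y_max.
by apply/eqP; apply: contraLR (z_max y Sy) => zy; rewrite -ltNge y_max.
Qed.

Lemma argmax_restrict (R : realType) (S C : set R) (f : R -> R) :
  C `<=` S -> (forall z, S z -> C z \/ exists2 w, C w & f z < f w) ->
  argmax S f = argmax C f.
Proof.
move=> CS dominated; apply/seteqP; split=> z [Sz z_max].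
  have [Cz|[w Cw fzw]] := dominated z Sz.
    by split=> // w Cw; apply/z_max/CS.
  by have := z_max w (CS _ Cw); rewrite leNgt fzw.
split=> [|w Sw]; first exact: CS.
have [Cw|[v Cv fwv]] := dominated w Sw; first exact: z_max.
exact/ltW/(lt_le_trans fwv)/z_max.
Qed.

Section ReducedPayoff.
Variables (R : realType) (a : R).
Hypothesis a01 : 0 < a < 1.
Implicit Types b c y z : R.

(* The unconstrained maximiser of payoff_line b c: there c + y = a (1 + c)
   and 1 - y = (1 - a) (1 + c). *)
Definition peak (c : R) := a - (1 - a) * c.

Definition payoff_line (b c y : R) := cobb_douglas a (b * (c + y)) (1 - y).

(* The payoff of the game in the coordinates of payoff_upd_reduced;
   payoff_line 1 0 is the payoff when the curve does not bind. *)
Definition reduced_payoff (b c y : R) :=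
  cobb_douglas a (Num.max y (b * (c + y))) (1 - y).

Lemma payoff_line_lt b c y z : 0 < b -> 0 < c + y -> y < 1 ->
  0 <= c + z -> z <= 1 -> z != y -> (z - y) * (peak c - y) <= 0 ->
  payoff_line b c z < payoff_line b c y.
Proof.
move=> b0 cy0 y1 cz0 z1 zy tangent.
apply: cobb_douglas_lt; rewrite ?mulr_gt0 ?subr_gt0 ?subr_ge0 //.
- by rewrite mulr_ge0 // ltW.
- apply: contra_neq zy => prop; apply/eqP; rewrite -subr_eq0.
  have : b * (1 + c) * (z - y) == 0.
    by apply/eqP; rewrite -(subrr ((1 - z) * (b * (c + y)))) -{1}prop; ring.
  have c1 : 0 < 1 + c by lra.
  by rewrite !mulf_eq0 (gt_eqF b0) (gt_eqF c1).
- rewrite -subr_le0 (_ : _ - _ = b * ((z - y) * (peak c - y))); last by rewrite /peak; ring.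
  by rewrite pmulr_rle0.
Qed.

Definition line_argmax c := Num.max (peak c) 0.

Lemma payoff_line_lt_argmax b c z : 0 < b -> -1 < c -> 0 <= c + z ->
  0 <= z <= 1 -> z != line_argmax c ->
  payoff_line b c z < payoff_line b c (line_argmax c).
Proof.
move=> b0 c1 cz0 /andP[z0 z1]; case/andP: a01 => a0 a1.
rewrite /line_argmax; have [pk_le0|pk_gt0] := leP (peak c) 0.
  by move=> z_neq0; apply: payoff_line_lt => //; rewrite /peak in pk_le0 *; nra.
by move=> z_neq_pk; apply: payoff_line_lt => //; rewrite /peak in pk_gt0 *; nra.
Qed.

Lemma line_argmax0 : line_argmax 0 = a.
Proof. by rewrite /line_argmax /peak mulr0 subr0 max_l // ltW; case/andP: a01. Qed.

Lemma reduced_payoff_eq_line b c y : y <= b * (c + y) ->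
  reduced_payoff b c y = payoff_line b c y.
Proof. by move=> ?; rewrite /reduced_payoff /payoff_line max_r. Qed.

Lemma reduced_payoff_eq_line0 b c y : b * (c + y) <= y ->
  reduced_payoff b c y = payoff_line 1 0 y.
Proof. by move=> ?; rewrite /reduced_payoff /payoff_line max_l // mul1r add0r. Qed.

Lemma payoff_line_le_reduced b c y : 0 <= b * (c + y) ->
  payoff_line b c y <= reduced_payoff b c y.
Proof.
case/andP: a01 => a0 _ ?.
by apply: cobb_douglas_le; rewrite // le_max lexx orbT andbT.
Qed.

Lemma payoff_line0_le_reduced b c y : 0 <= y ->
  payoff_line 1 0 y <= reduced_payoff b c y.
Proof.
case/andP: a01 => a0 _ ?.
by rewrite /payoff_line mul1r add0r; apply: cobb_douglas_le; rewrite // le_max lexx andbT.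
Qed.

Lemma payoff_line0_lt z : 0 <= z <= 1 -> z != a ->
  payoff_line 1 0 z < payoff_line 1 0 a.
Proof.
move=> /andP[z0 z1] za; rewrite -line_argmax0.
by apply: payoff_line_lt_argmax; rewrite ?line_argmax0 ?add0r ?z0.
Qed.

Section Maximizers.
Variable b : R.
Hypothesis b01 : 0 < b < 1.
Local Notation I01 := [set y : R | 0 <= y <= 1].

Lemma argmax_reduced_payoff_neg c : c < 0 ->
  argmax I01 (reduced_payoff b c) = [set a].
Proof.
move=> c0; have [a0 a1] := andP a01; have [b0 b1] := andP b01.
apply: argmax_set1 => [|z /andP[z0 z1] za]; first by rewrite /= !ltW.
rewrite reduced_payoff_eq_line0; last by nra.
apply: lt_le_trans _ (payoff_line0_le_reduced _ _ (ltW a0)).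
by apply: payoff_line0_lt; rewrite ?z0.
Qed.

Lemma argmax_reduced_payoff_interior c : 1 < b * (c + 1) -> (1 - a) * c <= a ->
  argmax I01 (reduced_payoff b c) = [set peak c].
Proof.
move=> hc hca; have [a0 a1] := andP a01; have [b0 b1] := andP b01.
have pkE : line_argmax c = peak c by rewrite /line_argmax max_l // /peak; lra.
apply: argmax_set1 => [|z /andP[z0 z1] z_neq]; first by rewrite /= /peak; nra.
rewrite reduced_payoff_eq_line; last by nra.
apply: lt_le_trans _ (payoff_line_le_reduced _); last by rewrite /peak; nra.
by rewrite -pkE; apply: payoff_line_lt_argmax; rewrite ?pkE ?z0 //; nra.
Qed.

Lemma argmax_reduced_payoff_high c : 1 - b <= b -> a <= (1 - a) * c ->
  argmax I01 (reduced_payoff b c) = [set 0].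
Proof.
move=> hb hca; have [a0 a1] := andP a01; have [b0 b1] := andP b01.
have c0 : 0 < c by nra.
have pkE : line_argmax c = 0 by rewrite /line_argmax max_r // /peak; lra.
have line_lt z : 0 <= z <= 1 -> z != 0 -> payoff_line b c z < reduced_payoff b c 0.
  move=> z01 z_neq0; apply: lt_le_trans _ (payoff_line_le_reduced _); last by nra.
  by rewrite -pkE; apply: payoff_line_lt_argmax; rewrite ?pkE //; case/andP: z01; nra.
apply: argmax_set1 => [|z /andP[z0 z1] z_neq0]; first by rewrite /= lexx ler01.
have [z_low|z_high] := leP z (b * (c + z)).
  by rewrite reduced_payoff_eq_line //; apply: line_lt; rewrite ?z0.
rewrite reduced_payoff_eq_line0 ?ltW //.
(* Past ys the curve no longer binds, and the uncurved payoff decreases there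
   because ys >= a. *)
pose ys := b * c / (1 - b).
have ys_fix : b * (c + ys) = ys by rewrite /ys; field; lra.
have ys_gt0 : 0 < ys by rewrite divr_gt0 ?mulr_gt0 ?subr_gt0.
have ys_lt_z : ys < z by nra.
have a_le_ys : a <= ys by nra.
apply: lt_trans (line_lt ys _ _); last 2 first.
- by rewrite ltW //= (le_trans (ltW ys_lt_z)).
- exact: lt0r_neq0.
rewrite (_ : payoff_line b c ys = payoff_line 1 0 ys); last first.
  by rewrite /payoff_line ys_fix mul1r add0r.
apply: payoff_line_lt; rewrite ?add0r ?gt_eqF //; rewrite /peak; nra.
Qed.

Lemma argmax_reduced_payoff_mid c : 0 <= c ->
  argmax I01 (reduced_payoff b c) =
  argmax [set y | (y = 0 \/ y = peak c \/ y = a) /\ 0 <= y <= 1] (reduced_payoff b c).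
Proof.
move=> c0; have [a0 a1] := andP a01; have [b0 b1] := andP b01.
set C := [set y | (_ \/ _) /\ _].
have C_argmax : C (line_argmax c).
  rewrite /C /line_argmax; have [_|pk_gt0] := leP (peak c) 0.
    by split; [left | rewrite lexx ler01].
  by split; [right; left | rewrite ltW //= /peak; nra].
have Ca : C a by split; [right; right | rewrite !ltW].
have argmax_ge0 : 0 <= line_argmax c by rewrite le_max lexx orbT.
apply: argmax_restrict => [y [] //|z /andP[z0 z1]].
have [->|z_ne_argmax] := eqVneq z (line_argmax c); first by left.
have [->|z_ne_a] := eqVneq z a; first by left.
right; have [z_low|z_high] := leP z (b * (c + z)).
  exists (line_argmax c) => //; rewrite reduced_payoff_eq_line //.
  apply: lt_le_trans _ (payoff_line_le_reduced _); last by nra.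
  by apply: payoff_line_lt_argmax; rewrite ?z0 //; nra.
exists a => //; rewrite reduced_payoff_eq_line0 ?ltW //.
apply: lt_le_trans _ (payoff_line0_le_reduced _ _ (ltW a0)).
by apply: payoff_line0_lt; rewrite ?z0.
Qed.
End Maximizers.
End ReducedPayoff.

Lemma payoff_upd_reduced (R : realType) n (alpha : 'I_n -> R) m x i y :
  (1 < n)%N ->
  payoff alpha m (upd x i y) i =
  reduced_payoff (alpha i) ((n.-1)%:R / n%:R)
    (n%:R * m / (n.-1)%:R - avg_others x i) y.
Proof.
move=> n_gt1; set S := \sum_(j < n | j != i) x j.
have N1_gt0 : 0 < (n.-1)%:R :> R by rewrite ltr0n -ltnS prednK // ltnW.
have nE : n%:R = (n.-1)%:R + 1 :> R by rewrite natr1 prednK // ltnW.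
have avgE : avg (upd x i y) = (y + S) / n%:R.
  rewrite /avg (bigD1 i) //= /upd eqxx; congr ((_ + _) / _).
  by apply: eq_bigr => j /negbTE ->.
rewrite /payoff /reduced_payoff /cobb_douglas /grade avgE /upd eqxx.
have -> : (n.-1)%:R / n%:R * (n%:R * m / (n.-1)%:R - avg_others x i + y) =
    y + (m - (y + S) / n%:R).
  by rewrite /avg_others -/S nE; field; apply/andP; split; apply: lt0r_neq0; lra.
set u := m - _; have [u_le0|u_gt0] := leP u 0.
  by rewrite addr0 max_l // gerDl.
by rewrite max_r // lerDl ltW.
Qed.

Theorem mainTheorem6 (R : realType) (n : nat) (alpha : 'I_n -> R) (m : R)
  (x : 'I_n -> R) (i : 'I_n) :
  (2 <= n)%N ->
  (forall j, 0 < alpha j < 1) ->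
  0 < m < 1 ->
  (forall j, j != i -> 0 <= x j <= 1) ->
  let xb := avg_others x i in
  let a := alpha i in
  let t := n%:R * m / (n.-1)%:R in
  let s := (n%:R * m - 1) / (n.-1)%:R in
  let BR := best_response alpha m x i in
  [/\ (t < xb <= 1 -> BR = [set a]),
      (s <= xb <= t ->
         BR = argmax (candidates alpha m x i)
                     (fun y => payoff alpha m (upd x i y) i)),
      (t - a / (1 - a) <= xb < s -> BR = [set a - (1 - a) * (t - xb)]) &
      (0 <= xb <= t - a / (1 - a) -> BR = [set 0])].
Proof.
move=> n_gt1 alpha01 _ _ xb a t s BR; have a01 := alpha01 i.
have a_lt1 : 0 < 1 - a by rewrite subr_gt0; case/andP: a01.
set N1 : R := (n.-1)%:R; set b := N1 / n%:R.
have N1_ge1 : 1 <= N1 by rewrite ler1n -ltnS prednK // ltnW.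
have nE : n%:R = N1 + 1 by rewrite natr1 prednK // ltnW.
have b01 : 0 < b < 1.
  by rewrite /b nE; apply/andP; split; [apply: divr_gt0 | rewrite ltr_pdivrMr]; lra.
have payoffE : (fun y => payoff alpha m (upd x i y) i) = reduced_payoff a b (t - xb).
  by apply: funext => y; exact: payoff_upd_reduced.
rewrite /BR /best_response payoffE.
split=> /andP[lo hi].
- by apply: argmax_reduced_payoff_neg => //; lra.
- by apply: argmax_reduced_payoff_mid => //; lra.
- apply: argmax_reduced_payoff_interior => //.
    have N1_gt0 : 0 < N1 by lra.
    have N1c_gt1 : 1 < N1 * (t - xb).
      rewrite -[ltLHS](mulfV (lt0r_neq0 N1_gt0)) ltr_pM2l //.
      by rewrite /s mulrBl mul1r -/t in hi; lra.
    by rewrite /b nE mulrAC ltr_pdivlMr; lra.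
  by rewrite mulrC -ler_pdivlMr //; lra.
- apply: argmax_reduced_payoff_high => //.
    rewrite -subr_ge0 (_ : _ - _ = (N1 - 1) / (N1 + 1)); first by rewrite divr_ge0 //; lra.
    by rewrite /b nE; field; lra.
  by rewrite mulrC -ler_pdivrMr //; lra.
Qed.
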